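(* Let $\phi:\Lambda\to\Gamma$ be an immersion between finite graphs, let $\prec$ be a total order on $V(\Gamma)$, and let $F$ be a finite nonempty subset of $V(\Lambda)$. If $\phi$ has the semi-induced path lifting property (SIPL) for $F$ with respect to $\prec$, then $\phi$ is $F$-surviving.
   Context: All graphs are undirected and simplicial (no loops, no multiple edges). For a graph $\Gamma$, ${\operatorname{Lk}}_\Gamma(v)$ is the set of vertices adjacent to $v$, and $G(\Gamma)$ is the group with generating set $V(\Gamma)$ and relations $[u,v]=1$ whenever $\{u,v\}$ is NOT an edge of $\Gamma$ (the right-angled Artin group on the complement graph). A map of graphs $\phi:\Lambda\to\Gamma$ sends vertices to vertices and adjacent vertices to adjacent vertices; it is an immersion if its restriction to ${\operatorname{Lk}}_\Lambda(v')$ is injective for every $v'\in V(\Lambda)$. A map of graphs induces a homomorphism $\phi^*:G(\Gamma)\to G(\Lambda)$, $\phi^*(v)=\prod_{v'\in\phi^{-1}(v)}v'$ (the identity if the fiber is empty; the factors pairwise commute). Fixing a total order on $V(\Lambda)$, for a word $w$ in $V(\Gamma)^{\pm1}$, $\phi^*(w)$ also denotes the word obtained by replacing each letter $v^{\pm1}$ by the product over $\phi^{-1}(v)$ written in increasing order, resp. its formal inverse. A word is reduced if it has minimal length among words representing the same group element; ${\operatorname{supp}}(w)$ is the set of vertices $v$ such that $v$ or $v^{-1}$ occurs in $w$. In a word $u$ in $G(\Lambda)$, a subword $x^{\pm1}u_1x^{\mp1}$ is an innermost cancellation of $x$ if ${\operatorname{supp}}(u_1)\cap{\operatorname{Lk}}_\Lambda(x)=\emptyset$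 and no letter of $u_1$ equals $x^{\pm1}$. $\phi$ is $v'$-surviving ($v'\in V(\Lambda)$) if for every reduced word $w$ in $G(\Gamma)$ the word $\phi^*(w)$ has no innermost cancellation of $v'$; it is $F$-surviving if it is $v'$-surviving for every $v'\in F$. A path in $\Gamma$ is a tuple $(v_0,\dots,v_k)$ of pairwise distinct vertices with $\{v_i,v_{i+1}\}\in E(\Gamma)$ for all $i$. Given a total order $\prec$ on $V(\Gamma)$, a path $(v_0,\dots,v_k)$ is semi-induced if $\{v_i,v_j\}\notin E(\Gamma)$ whenever $j\ge i+2$ and $v_j\prec v_{i+1}$. A path $(v_0',\dots,v_k')$ in $\Lambda$ is a lift of $(v_0,\dots,v_k)$ if $\phi(v_i')=v_i$ for all $i$. $\phi$ has SIPL for $F\subseteq V(\Lambda)$ (w.r.t. $\prec$) if for every $v'\in F$ and every semi-induced path in $\Gamma$ starting at $\phi(v')$ there is a lift of it to $\Lambda$ starting at $v'$. *)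

From mathcomp Require Import all_boot.
From Stdlib Require Import Relation_Operators.
Set Implicit Arguments. Unset Strict Implicit. Unset Printing Implicit Defensive.

Definition simple_graph (T : finType) (e : rel T) : Prop :=
  symmetric e /\ irreflexive e.

(* Letters: (v, true) = v, (v, false) = v^{-1}.  Words = seq of letters. *)
Definition letter (T : Type) := (T * bool)%type.
Definition linv (T : Type) (x : letter T) : letter T := (x.1, ~~ x.2).

(* One elementary move in the presentation of G(Gamma) (RAAG on the complement):
   free (de)reduction, or swapping two adjacent letters whose vertices span a
   NON-edge of Gamma. *)
Inductive raag_step (T : finType) (e : rel T) : seq (letter T) -> seq (letter T) -> Prop :=
| rs_del a b x : raag_step e (a ++ x :: linv x :: b) (a ++ b)
| rs_ins a b x : raag_step e (a ++ b) (a ++ x :: linv x :: b)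
| rs_comm a b x y : ~~ e x.1 y.1 -> raag_step e (a ++ x :: y :: b) (a ++ y :: x :: b).

Definition raag_eq (T : finType) (e : rel T) := clos_refl_sym_trans _ (@raag_step T e).

Definition reduced (T : finType) (e : rel T) (w : seq (letter T)) : Prop :=
  forall w', raag_eq e w w' -> size w <= size w'.

Definition graph_map (TL TG : finType) (eL : rel TL) (eG : rel TG) (f : TL -> TG) :=
  forall x y, eL x y -> eG (f x) (f y).

Definition immersion (TL TG : finType) (eL : rel TL) (eG : rel TG) (f : TL -> TG) :=
  graph_map eL eG f /\ forall v, {in [pred u | eL v u] &, injective f}.

(* phi^*(w) as a word, given the total order on V(Lambda) as a listing ordL
   (in increasing order) of all vertices of Lambda. *)
Definition pullback_letter (TL TG : finType) (ordL : seq TL) (f : TL -> TG)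
  (x : letter TG) : seq (letter TL) :=
  let fib := [seq (v', true) | v' <- ordL & f v' == x.1] in
  if x.2 then fib else rev (map (@linv TL) fib).

Definition pullback_word (TL TG : finType) (ordL : seq TL) (f : TL -> TG)
  (w : seq (letter TG)) : seq (letter TL) :=
  flatten (map (pullback_letter ordL f) w).

Definition innermost_cancellation (TL : finType) (eL : rel TL) (u : seq (letter TL)) (x : TL) :=
  exists a u1 b (s : bool),
    u = a ++ (x, s) :: u1 ++ (x, ~~ s) :: b /\
    (forall y, y \in u1 -> ~~ eL x y.1 /\ y.1 != x).

Definition surviving_at (TL TG : finType) (eL : rel TL) (eG : rel TG) (ordL : seq TL)
  (f : TL -> TG) (v : TL) :=
  forall w : seq (letter TG), reduced eG w -> ~ innermost_cancellation eL (pullback_word ordL f w) v.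

Definition F_surviving (TL TG : finType) (eL : rel TL) (eG : rel TG) (ordL : seq TL)
  (f : TL -> TG) (F : {set TL}) :=
  forall v, v \in F -> surviving_at eL eG ordL f v.

(* Paths: a path (v_0,...,v_k) is represented as x :: s with x = v_0;
   vertices pairwise distinct, consecutive vertices adjacent. *)
Definition is_gpath (T : finType) (e : rel T) (x : T) (s : seq T) : bool :=
  uniq (x :: s) && path e x s.

Definition semi_induced (T : finType) (e : rel T) (lt : rel T) (x : T) (s : seq T) : Prop :=
  forall i j, j < size (x :: s) -> i.+2 <= j ->
    lt (nth x (x :: s) j) (nth x (x :: s) i.+1) ->
    ~~ e (nth x (x :: s) i) (nth x (x :: s) j).

Definition strict_total_order (T : finType) (lt : rel T) : Prop :=
  irreflexive lt /\ transitive lt /\ (forall x y, x != y -> lt x y || lt y x).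

Definition SIPL (TL TG : finType) (eL : rel TL) (eG : rel TG) (f : TL -> TG)
  (F : {set TL}) (lt : rel TG) : Prop :=
  forall v', v' \in F -> forall s : seq TG,
    is_gpath eG (f v') s -> semi_induced eG lt (f v') s ->
    exists s' : seq TL, is_gpath eL v' s' /\ map f s' = s.

From mathcomp Require Import all_boot.
From Stdlib Require Import Relation_Operators.
From mathcomp Require Import zify.
Set Implicit Arguments. Unset Strict Implicit. Unset Printing Implicit Defensive.

(* Suppose phi^*(w) contained an innermost cancellation v'^s u1 v'^-s.  The two
   letters come from letters x and x^-1 of w with phi(v') = x, separated by a
   subword w1 whose pullback lies inside u1.  Since w is reduced, x cannot
   commute past w1, so some letter z of w1 is adjacent to phi(v').  The edge
   (phi(v'), z) is a semi-induced path, so SIPL lifts it to an edge (v', z'),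
   and z' occurs in phi^*(z), hence in u1, contradicting innermostness.
   Only single edges are lifted. *)

Lemma eq_cat_cat_cons (T : Type) (p q r s : seq T) z :
  p ++ q = r ++ z :: s ->
  (exists p', p = r ++ z :: p' /\ s = p' ++ q) \/
  (exists r', r = p ++ r' /\ q = r' ++ z :: s).
Proof.
elim: p r => [|x p IH] [|y r] //=.
- by move=> ->; right; exists [::].
- by move=> ->; right; exists (y :: r).
- by case=> -> <-; left; exists p.
case=> -> /IH [[p' [-> ->]]|[r' [-> ->]]].
  by left; exists p'.
by right; exists r'.
Qed.

Lemma flatten_map_eq_cat_cons (A B : Type) (g : A -> seq B) w a z c :
  flatten (map g w) = a ++ z :: c ->
  exists w0 x w2 a1 c1, [/\ w = w0 ++ x :: w2, g x = a1 ++ z :: c1,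
     a = flatten (map g w0) ++ a1 & c = c1 ++ flatten (map g w2)].
Proof.
elim: w a => [|x w IH] a /=; first by case: a.
move=> eq_flat; case: (eq_cat_cat_cons eq_flat) => [[p' [Hx Hc]]|[r' [Ha Hw]]].
  by exists [::], x, w, a, p'.
have [w0 [y [w2 [a1 [c1 [-> Hy Hr' Hc]]]]]] := IH _ Hw.
by exists (x :: w0), y, w2, a1, c1; rewrite Ha Hr' /= catA.
Qed.

Section RaagWords.
Variables (T : finType) (e : rel T).

Lemma raag_eq_commute_past (x : letter T) w1 a b :
  all (fun z : letter T => ~~ e x.1 z.1) w1 ->
  raag_eq e (a ++ x :: w1 ++ b) (a ++ w1 ++ x :: b).
Proof.
elim: w1 a => [|z w1 IH] a /=; first by move=> _; apply: rst_refl.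
case/andP=> xz xw1.
apply: (rst_trans _ _ _ (a ++ z :: x :: w1 ++ b)).
  by apply: rst_step; apply: rs_comm.
by have := IH (rcons a z) xw1; rewrite -!cats1 -!catA.
Qed.

Lemma reduced_cancelling_pair_adj (w w0 w1 w2 : seq (letter T)) x :
  reduced e w -> w = w0 ++ x :: w1 ++ linv x :: w2 ->
  has (fun z : letter T => e x.1 z.1) w1.
Proof.
move=> red_w def_w; apply/negPn/negP; rewrite -all_predC => commute_x.
have eq_w : raag_eq e w (w0 ++ w1 ++ w2).
  rewrite def_w; apply: (rst_trans _ _ _ (w0 ++ w1 ++ x :: linv x :: w2)).
    exact: raag_eq_commute_past.
  by rewrite !catA; apply: rst_step; apply: rs_del.
by have := red_w _ eq_w; rewrite def_w !size_cat /= size_cat /=; lia.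
Qed.

End RaagWords.

Section Pullback.
Variables (TL TG : finType) (ordL : seq TL) (f : TL -> TG).

Lemma mem_pullback_letter (y : letter TL) (x : letter TG) :
  y \in pullback_letter ordL f x -> f y.1 = x.1 /\ y.2 = x.2.
Proof.
case: x => v [|]; rewrite /pullback_letter /= ?mem_rev -?map_comp;
by case/mapP=> v'; rewrite mem_filter => /andP [/eqP ? _] ->.
Qed.

Lemma innermost_cancellation_pullback (eL : rel TL) w v :
  innermost_cancellation eL (pullback_word ordL f w) v ->
  exists w0 x w1 w2, [/\ w = w0 ++ x :: w1 ++ linv x :: w2, x.1 = f v &
    {in flatten (map (pullback_letter ordL f) w1), forall y, ~~ eL v y.1}].
Proof.
case=> a [u1 [b [s [pb_w u1_not_adj]]]].
have [w0 [x [w' [a1 [c1 [-> gx _ c1_u1]]]]]] := flatten_map_eq_cat_cons pb_w.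
have [fvx sx] : f v = x.1 /\ s = x.2.
  by apply: (mem_pullback_letter (y := (v, s))); rewrite gx mem_cat mem_head orbT.
have [[p' [c1_eq _]]|[r' [u1_eq pb_w']]] := eq_cat_cat_cons (esym c1_u1).
  (* all letters of phi^*(x) carry the sign of x *)
  have : (v, ~~ s) \in pullback_letter ordL f x.
    by rewrite gx c1_eq !(mem_cat, inE) eqxx !orbT.
  by case/mem_pullback_letter=> _ /=; rewrite sx; case: x.2.
have [w1 [y [w2 [a2 [c2 [-> gy r'_eq _]]]]]] := flatten_map_eq_cat_cons pb_w'.
have [fvy sy] : f v = y.1 /\ ~~ s = y.2.
  by apply: (mem_pullback_letter (y := (v, ~~ s))); rewrite gy mem_cat mem_head orbT.
have -> : y = linv x by rewrite /linv -fvx -sx fvy sy -surjective_pairing.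
exists w0, x, w1, w2; split => // z z_w1.
by case: (u1_not_adj z); rewrite // u1_eq r'_eq !mem_cat z_w1 orbT.
Qed.

Hypothesis ordL_total : forall v : TL, v \in ordL.

Lemma pullback_letterP (v : TL) (x : letter TG) :
  f v = x.1 -> (v, x.2) \in pullback_letter ordL f x.
Proof.
case: x => u [|] /= fv; rewrite /pullback_letter /= ?mem_rev -?map_comp;
by apply/mapP; exists v; rewrite // mem_filter fv eqxx ordL_total.
Qed.

End Pullback.

Lemma SIPL_lift_edge (TL TG : finType) (eL : rel TL) (eG : rel TG) (f : TL -> TG)
    (F : {set TL}) (lt : rel TG) v u :
  irreflexive eG -> SIPL eL eG f F lt -> v \in F -> eG (f v) u ->
  exists2 v', eL v v' & f v' = u.
Proof.
move=> irrG sipl vF fvu.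
have fv_neq_u : f v != u by apply: contraTneq fvu => ->; rewrite irrG.
have path_fvu : is_gpath eG (f v) [:: u] by rewrite /is_gpath /= inE fv_neq_u fvu.
have semi_fvu : semi_induced eG lt (f v) [:: u] by move=> i [|[|j]].
have [[|v' [|? ?]] [] //] := sipl v vF [:: u] path_fvu semi_fvu.
by case/andP=> _ /=; rewrite andbT => vv' [<-]; exists v'.
Qed.

Theorem theorem3p9 (TL TG : finType) (eL : rel TL) (eG : rel TG) (f : TL -> TG)
  (lt : rel TG) (F : {set TL}) (ordL : seq TL) :
  simple_graph eL -> simple_graph eG ->
  immersion eL eG f ->
  strict_total_order lt ->
  uniq ordL -> (forall v : TL, v \in ordL) ->
  F != set0 ->
  SIPL eL eG f F lt ->
  F_surviving eL eG ordL f F.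
Proof.
move=> _ [_ irrG] _ _ _ ordL_total _ sipl v vF w red_w.
move=> /innermost_cancellation_pullback [w0 [x [w1 [w2 [def_w xv not_adj]]]]].
have /hasP [z z_w1] := reduced_cancelling_pair_adj red_w def_w.
rewrite xv => /(SIPL_lift_edge irrG sipl vF) [v' vv' fv'].
have : (v', z.2) \in flatten (map (pullback_letter ordL f) w1).
  by apply/flattenP; exists (pullback_letter ordL f z); rewrite ?map_f ?pullback_letterP.
by move/not_adj; rewrite vv'.
Qed.
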